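(* Let $(\varphi_n)_{n\ge 0}$ be vectors in $\mathbb{R}^d$ and set $r_0=1$, $r_n=1+\sum_{i=1}^n\|\varphi_i\|^2$ for $n\ge1$. Define $A_n=\varphi_n\varphi_n^\top/r_n$ and the transition matrices $\Phi(i,i)=I$, $\Phi(n+1,i)=(I-A_n)\Phi(n,i)$ for $n\ge i$. Let $(t_k)_{k\ge0}$ be a strictly increasing sequence of integers with $t_0\ge 1$. Set $$S_{t_kt_{k-1}}=\sum_{i=t_{k-1}}^{t_k-1}\varphi_i\varphi_i^\top,\qquad D_k=r_{t_k-1}\left(\log r_{t_k-1}-\log r_{t_{k-1}-1}\right)+r_{t_{k-1}-1}.$$ If $\sum_{k=1}^\infty \lambda_{\min}(S_{t_kt_{k-1}})/D_k=\infty$, then $\Phi(n,0)\to0$ as $n\to\infty$.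
   Context: $\log$ is the natural logarithm, $\|\cdot\|$ the Euclidean norm, $\lambda_{\min}$ the smallest eigenvalue of a symmetric matrix. *)

From HB Require Import structures.
From mathcomp Require Import all_boot all_order all_algebra.
From mathcomp Require Import all_classical all_reals all_analysis.
Set Implicit Arguments. Unset Strict Implicit. Unset Printing Implicit Defensive.
Import Order.TTheory GRing.Theory Num.Theory.
Import numFieldNormedType.Exports.
Local Open Scope ring_scope.
Local Open Scope classical_set_scope.

Section Defs.
Variables (R : realType) (d : nat).

Definition sqnorm (v : 'cV[R]_d) : R := \sum_(j < d) (v j 0) ^+ 2.

Definition rr (phi : nat -> 'cV[R]_d) (n : nat) : R :=
  1 + \sum_(1 <= i < n.+1) sqnorm (phi i).

Definition AA (phi : nat -> 'cV[R]_d) (n : nat) : 'M[R]_d :=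
  (rr phi n)^-1 *: (phi n *m (phi n)^T).

(* Transition matrix Phi(n,i): Phi(i,i) = I, Phi(n+1,i) = (I - A_n) Phi(n,i)
   for n >= i (value for n < i is irrelevant; set to I). *)
Fixpoint Phi (phi : nat -> 'cV[R]_d) (n i : nat) : 'M[R]_d :=
  match n with
  | 0 => 1%:M
  | n'.+1 => if (i <= n')%N then (1%:M - AA phi n') *m Phi phi n' i else 1%:M
  end.

Definition lambda_min (S : 'M[R]_d) : R := inf [set a : R | eigenvalue S a].

(* S_{t_{k+1} t_k} = sum_{i = t_k}^{t_{k+1}-1} phi_i phi_i^T *)
Definition Sblock (phi : nat -> 'cV[R]_d) (t : nat -> nat) (k : nat) : 'M[R]_d :=
  \sum_(t k <= i < t k.+1) (phi i *m (phi i)^T).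

(* D_{k+1} = r_{t_{k+1}-1} (log r_{t_{k+1}-1} - log r_{t_k - 1}) + r_{t_k - 1} *)
Definition Dblock (phi : nat -> 'cV[R]_d) (t : nat -> nat) (k : nat) : R :=
  rr phi (t k.+1 - 1) * (ln (rr phi (t k.+1 - 1)) - ln (rr phi (t k - 1)))
  + rr phi (t k - 1).

End Defs.

From HB Require Import structures.
From mathcomp Require Import all_boot all_order all_algebra.
From mathcomp Require Import all_classical all_reals all_analysis.
From mathcomp Require Import lra ring.
Set Implicit Arguments. Unset Strict Implicit. Unset Printing Implicit Defensive.
Import Order.TTheory GRing.Theory Num.Theory.
Import numFieldNormedType.Exports.
Local Open Scope ring_scope.
Local Open Scope classical_set_scope.

(* Let x_n = Phi(n,0) e_j and V_n = |x_n|^2.  For n >= 1 one step of the recursion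
   gives V_(n+1) + (phi_n . x_n)^2 / r_n <= V_n.  On a block [s, t) the drift
   x_s - x_i is a sum of the terms (phi_j . x_j / r_j) phi_j, so a weighted
   Cauchy-Schwarz inequality together with |phi_j|^2 / r_j <= log r_j - log r_(j-1)
   yields |x_s - x_i|^2 <= (log r_(t-1) - log r_(s-1)) (V_s - V_t).  Comparing
   phi_i . x_s with phi_i . x_i then bounds x_s^T S x_s = sum_i (phi_i . x_s)^2
   by 4 D (V_s - V_t), and the Rayleigh bound lambda_min(S) V_s <= x_s^T S x_s
   gives V_t <= exp (- lambda_min(S) / (4 D)) V_s.  Along the blocks V therefore
   decays like exp (- 1/4 sum_k lambda_min(S_k) / D_k), which tends to 0. *)

Lemma quad_ge0_discr (R : realFieldType) (a b c : R) : 0 <= c ->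
  (forall s, 0 <= a + 2 * b * s + c * s ^+ 2) -> b ^+ 2 <= a * c.
Proof.
move=> c_ge0 quad_ge0; have [c_gt0|] := ltrP 0 c.
  have := quad_ge0 (- b / c).
  have -> : a + 2 * b * (- b / c) + c * (- b / c) ^+ 2 = a - b ^+ 2 / c.
    by field; rewrite gt_eqF.
  by rewrite subr_ge0 ler_pdivrMr.
move=> c_le0; have c_eq0 : c = 0 by apply/eqP; rewrite eq_le c_le0 c_ge0.
subst c; rewrite mulr0.
have [-> | b_neq0] := eqVneq b 0; first by rewrite expr0n.
have := quad_ge0 (- (a + 1) / (2 * b)).
have -> : a + 2 * b * (- (a + 1) / (2 * b)) + 0 * (- (a + 1) / (2 * b)) ^+ 2 = -1.
  by field; rewrite b_neq0.
by rewrite ler0N1.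
Qed.

Lemma two_mul_le_add (R : realFieldType) (p X Y : R) : 0 <= X -> 0 <= Y ->
  p ^+ 2 <= X * Y -> 2 * p <= X + Y.
Proof.
by move=> X_ge0 Y_ge0 pXY; have := sqr_ge0 (X - Y); nra.
Qed.

Section Forms.
Variables (R : realType) (d : nat).
Implicit Types (u v w : 'cV[R]_d) (S : 'M[R]_d).

Definition dotv u v : R := (u^T *m v) 0 0.

Lemma dotvE u v : dotv u v = \sum_(j < d) u j 0 * v j 0.
Proof. by rewrite /dotv mxE; apply: eq_bigr => j _; rewrite mxE. Qed.

Lemma sqnorm_dotv u : sqnorm u = dotv u u.
Proof. by rewrite dotvE; apply: eq_bigr => j _; rewrite expr2. Qed.

Lemma dotvC u v : dotv u v = dotv v u.
Proof. by rewrite !dotvE; apply: eq_bigr => j _; rewrite mulrC. Qed.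

Lemma dotvDr u v w : dotv u (v + w) = dotv u v + dotv u w.
Proof. by rewrite /dotv mulmxDr mxE. Qed.

Lemma dotvZr a u v : dotv u (a *: v) = a * dotv u v.
Proof. by rewrite /dotv -scalemxAr mxE. Qed.

Lemma dotvNr u v : dotv u (- v) = - dotv u v.
Proof. by rewrite /dotv mulmxN mxE. Qed.

Lemma dotvDl u v w : dotv (u + v) w = dotv u w + dotv v w.
Proof. by rewrite dotvC dotvDr !(dotvC w). Qed.

Lemma dotvZl a u v : dotv (a *: u) v = a * dotv u v.
Proof. by rewrite dotvC dotvZr dotvC. Qed.

Lemma dotv_sumr I (r : seq I) (P : pred I) (F : I -> 'cV[R]_d) u :
  dotv u (\sum_(i <- r | P i) F i) = \sum_(i <- r | P i) dotv u (F i).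
Proof. by rewrite /dotv mulmx_sumr summxE. Qed.

Lemma dotv_mulmx S u v : dotv u (S *m v) = dotv (S^T *m u) v.
Proof. by rewrite /dotv trmx_mul trmxK mulmxA. Qed.

Lemma dotv_mulmxl S u v : dotv (S *m u) v = dotv u (S^T *m v).
Proof. by rewrite dotv_mulmx trmxK. Qed.

Lemma mulmx_rank1 u v : (u *m u^T) *m v = dotv u v *: u.
Proof. by rewrite -mulmxA [u^T *m v]mx11_scalar mul_mx_scalar. Qed.

Lemma sqnorm_ge0 u : 0 <= sqnorm u.
Proof. by apply: sumr_ge0 => j _; rewrite sqr_ge0. Qed.

Lemma sqr_coord_le_sqnorm u i : u i 0 ^+ 2 <= sqnorm u.
Proof.
by rewrite /sqnorm (bigD1 i) //= lerDl; apply: sumr_ge0 => j _; rewrite sqr_ge0.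
Qed.

Lemma sqnorm_eq0 u : (sqnorm u == 0) = (u == 0).
Proof.
apply/eqP/eqP => [u0|->]; last by apply: big1 => j _; rewrite mxE expr0n.
apply/matrixP => i j; rewrite (ord1 j) mxE; apply/eqP; rewrite -sqrf_eq0 eq_le sqr_ge0.
by rewrite -u0 sqr_coord_le_sqnorm.
Qed.

Lemma sqnorm0 : sqnorm (0 : 'cV[R]_d) = 0.
Proof. by apply/eqP; rewrite sqnorm_eq0. Qed.

Lemma sqnormZ a u : sqnorm (a *: u) = a ^+ 2 * sqnorm u.
Proof. by rewrite !sqnorm_dotv dotvZl dotvZr mulrA -expr2. Qed.

Definition bform S u v : R := dotv u (S *m v).
Definition qform S u : R := bform S u u.

Lemma qformr0 S : qform S 0 = 0.
Proof. by rewrite /qform /bform mulmx0 /dotv mulmx0 mxE. Qed.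

Lemma qform_sum I (r : seq I) (P : pred I) (F : I -> 'M[R]_d) u :
  qform (\sum_(i <- r | P i) F i) u = \sum_(i <- r | P i) qform (F i) u.
Proof. by rewrite /qform /bform mulmx_suml dotv_sumr. Qed.

Lemma qform_rank1 u v : qform (u *m u^T) v = dotv u v ^+ 2.
Proof. by rewrite /qform /bform mulmx_rank1 dotvZr dotvC expr2. Qed.

Lemma bformC S u v : S^T = S -> bform S u v = bform S v u.
Proof. by move=> S_sym; rewrite /bform dotv_mulmx S_sym dotvC. Qed.

Lemma qform1 u : qform 1%:M u = sqnorm u.
Proof. by rewrite /qform /bform mul1mx sqnorm_dotv. Qed.

Lemma qformDZ S u v s : S^T = S ->
  qform S (u + s *: v) = qform S u + 2 * s * bform S u v + s ^+ 2 * qform S v.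
Proof.
move=> S_sym; rewrite /qform /bform mulmxDr -scalemxAr.
rewrite !(dotvDl, dotvDr, dotvZl, dotvZr) -/(bform S v u) -/(bform S u v).
by rewrite (bformC _ _ S_sym) /bform; ring.
Qed.

Lemma bform_CauchySchwarz S u v : S^T = S -> (forall w, 0 <= qform S w) ->
  bform S u v ^+ 2 <= qform S u * qform S v.
Proof.
move=> S_sym S_psd; apply: quad_ge0_discr (S_psd v) _ => s.
by have := S_psd (u + s *: v); rewrite qformDZ //; lra.
Qed.

Lemma dotv_CauchySchwarz u v : dotv u v ^+ 2 <= sqnorm u * sqnorm v.
Proof.
have := @bform_CauchySchwarz 1%:M u v (trmx1 _ _).
by rewrite /bform mul1mx !qform1; apply => w; rewrite qform1 sqnorm_ge0.
Qed.

Lemma sqnormDZ u v s :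
  sqnorm (u + s *: v) = sqnorm u + 2 * s * dotv u v + s ^+ 2 * sqnorm v.
Proof. by rewrite -!qform1 qformDZ ?trmx1 // /bform mul1mx. Qed.

Lemma sqnormD u v : sqnorm (u + v) = sqnorm u + 2 * dotv u v + sqnorm v.
Proof. by rewrite -[v]scale1r sqnormDZ scale1r mulr1 expr1n mul1r. Qed.

Lemma sqnorm_sum_le I (r : seq I) (F : I -> 'cV[R]_d) (c w : I -> R) :
  (forall i, 0 <= c i) -> (forall i, 0 <= w i) ->
  (forall i, sqnorm (F i) <= c i * w i) ->
  sqnorm (\sum_(i <- r) F i) <= (\sum_(i <- r) c i) * (\sum_(i <- r) w i).
Proof.
move=> c_ge0 w_ge0 F_le; elim: r => [|a r IH].
  by rewrite !big_nil mulr0 sqnorm0.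
rewrite !big_cons sqnormD.
set U := \sum_(i <- r) F i in IH *; set C := \sum_(i <- r) c i in IH *.
set W := \sum_(i <- r) w i in IH *.
have C_ge0 : 0 <= C by apply: sumr_ge0.
have W_ge0 : 0 <= W by apply: sumr_ge0.
have cross : 2 * dotv (F a) U <= c a * W + C * w a.
  apply: two_mul_le_add; rewrite ?mulr_ge0 //.
  apply: le_trans (dotv_CauchySchwarz _ _) _.
  have -> : c a * W * (C * w a) = (c a * w a) * (C * W) by ring.
  by apply: ler_pM; rewrite ?sqnorm_ge0.
have := F_le a; lra.
Qed.

End Forms.

Section Rayleigh.
Variables (R : realType) (d : nat).
Implicit Types (u v : 'cV[R]_d) (S : 'M[R]_d).

Definition mx_abs_sum S : R := \sum_i \sum_j `|S i j|.

Lemma qformE S u : qform S u = \sum_i \sum_j u i 0 * S i j * u j 0.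
Proof.
rewrite /qform /bform dotvE; apply: eq_bigr => i _.
by rewrite mxE mulr_sumr; apply: eq_bigr => j _; rewrite mulrA.
Qed.

Lemma qform_le_abs_sum S u : qform S u <= mx_abs_sum S * sqnorm u.
Proof.
rewrite qformE mulr_suml; apply: ler_sum => i _; rewrite mulr_suml.
apply: ler_sum => j _; apply: le_trans (ler_norm _) _.
rewrite !normrM mulrAC mulrC ler_wpM2l //.
have := sqr_coord_le_sqnorm u i; have := sqr_coord_le_sqnorm u j.
rewrite -[u i 0 ^+ 2]real_normK ?num_real // -[u j 0 ^+ 2]real_normK ?num_real //.
by have := sqr_ge0 (`|u i 0| - `|u j 0|); nra.
Qed.

Lemma qform_ge_abs_sum S u : - (mx_abs_sum S * sqnorm u) <= qform S u.
Proof.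
have := qform_le_abs_sum (- S) u.
have -> : mx_abs_sum (- S) = mx_abs_sum S.
  by apply: eq_bigr => i _; apply: eq_bigr => j _; rewrite mxE normrN.
by rewrite /qform /bform mulNmx dotvNr lerNl.
Qed.

Lemma qform_subr_scalar S a u : qform (S - a%:M) u = qform S u - a * sqnorm u.
Proof.
by rewrite /qform /bform mulmxBl mul_scalar_mx dotvDr dotvNr dotvZr sqnorm_dotv.
Qed.

Lemma qform_mulmx S T u : qform (T^T *m S *m T) u = qform S (T *m u).
Proof. by rewrite /qform /bform -!mulmxA dotv_mulmx trmxK. Qed.

Lemma psd_unitmx_coercive S : S^T = S -> (forall u, 0 <= qform S u) ->
  S \in unitmx -> exists2 c, 0 < c & forall u, c * sqnorm u <= qform S u.
Proof.
move=> S_sym S_psd S_unit; set Q := invmx S.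
have Q_sym : Q^T = Q by rewrite /Q trmx_inv S_sym.
have SQ : S *m Q = 1%:M by rewrite /Q mulmxV.
have Q_psd u : 0 <= qform Q u.
  by have := S_psd (Q *m u); rewrite -qform_mulmx Q_sym -mulmxA SQ mulmx1.
have K_ge0 : 0 <= mx_abs_sum Q.
  by apply: sumr_ge0 => i _; apply: sumr_ge0.
exists (mx_abs_sum Q + 1)^-1; first by rewrite invr_gt0 ltr_wpDl.
move=> u; rewrite mulrC ler_pdivrMr ?ltr_wpDl //.
have qS_ge0 := S_psd u.
have [-> | u_neq0] := eqVneq (sqnorm u) 0; first by rewrite mulr_ge0 ?addr_ge0.
have N_gt0 : 0 < sqnorm u by rewrite lt_def u_neq0 sqnorm_ge0.
have := bform_CauchySchwarz (S *m u) u Q_sym Q_psd.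
have -> : bform Q (S *m u) u = sqnorm u.
  by rewrite /bform dotv_mulmxl S_sym mulmxA SQ mul1mx sqnorm_dotv.
have -> : qform Q (S *m u) = qform S u.
  by rewrite /qform /bform dotv_mulmxl S_sym !mulmxA SQ mul1mx.
have := qform_le_abs_sum Q u; nra.
Qed.

Definition rayleigh_set S := [set mu : R | forall u, mu * sqnorm u <= qform S u].
Definition rayleigh_lb S := sup (rayleigh_set S).

Lemma rayleigh_set_ubound S u : u != 0 -> ubound (rayleigh_set S) (qform S u / sqnorm u).
Proof.
rewrite -sqnorm_eq0 => u_neq0 mu mu_lb.
by rewrite ler_pdivlMr ?lt_def ?u_neq0 ?sqnorm_ge0 ?mu_lb.
Qed.

Lemma rayleigh_set_neq0 S : rayleigh_set S !=set0.
Proof. by exists (- mx_abs_sum S) => u; rewrite mulNr qform_ge_abs_sum. Qed.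

Lemma rayleigh_lb_mul_le_qform S u : rayleigh_lb S * sqnorm u <= qform S u.
Proof.
have [-> | u_neq0] := eqVneq u 0.
  by rewrite sqnorm0 qformr0 mulr0.
have N_gt0 : 0 < sqnorm u by rewrite lt_def sqnorm_eq0 u_neq0 sqnorm_ge0.
rewrite -ler_pdivlMr //; apply: ge_sup; first exact: rayleigh_set_neq0.
exact: rayleigh_set_ubound.
Qed.

Lemma rayleigh_lb_le_eigenvalue S a : eigenvalue S a -> rayleigh_lb S <= a.
Proof.
case/eigenvalueP => v Sv v_neq0; have u_neq0 : v^T != 0 by rewrite trmx_eq0.
have N_gt0 : 0 < sqnorm v^T by rewrite lt_def sqnorm_eq0 u_neq0 sqnorm_ge0.
rewrite -(ler_pM2r N_gt0); apply: le_trans (rayleigh_lb_mul_le_qform S v^T) _.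
by rewrite /qform /bform /dotv trmxK mulmxA Sv -scalemxAl mxE sqnorm_dotv /dotv trmxK.
Qed.

Lemma eigenvalue_rayleigh_lb S : S^T = S -> (0 < d)%N -> eigenvalue S (rayleigh_lb S).
Proof.
move=> S_sym d_gt0; apply: contraT => not_eig; exfalso.
set M := rayleigh_lb S; set P := S - M%:M.
(* [P] is positive semidefinite; if it were invertible it would be coercive,
   so [M] could be increased. *)
have P_unit : P \in unitmx.
  by rewrite -row_free_unit -kermx_eq0; move: not_eig; rewrite negbK.
have P_sym : P^T = P by rewrite /P linearB /= S_sym tr_scalar_mx.
have P_psd u : 0 <= qform P u.
  by rewrite qform_subr_scalar subr_ge0 rayleigh_lb_mul_le_qform.
have [c c_gt0 Pc] := psd_unitmx_coercive P_sym P_psd P_unit.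
have Mc_lb : rayleigh_set S (M + c).
  by move=> u; have := Pc u; rewrite qform_subr_scalar mulrDl; lra.
have const1_neq0 : const_mx 1 != 0 :> 'cV[R]_d.
  apply/eqP => /matrixP /(_ (Ordinal d_gt0) 0) /eqP; rewrite !mxE.
  exact/negP/oner_neq0.
have := ub_le_sup (ex_intro _ _ (@rayleigh_set_ubound S _ const1_neq0)) Mc_lb.
by rewrite -/(rayleigh_lb S) -/M; lra.
Qed.

Lemma lambda_min_mul_le_qform S u : S^T = S -> lambda_min S * sqnorm u <= qform S u.
Proof.
move=> S_sym; have [-> | u_neq0] := eqVneq u 0; first by rewrite sqnorm0 qformr0 mulr0.
have d_gt0 : (0 < d)%N.
  rewrite lt0n; apply: contra u_neq0 => /eqP d0.
  by apply/eqP/matrixP => -[i i_lt] j; exfalso; rewrite d0 in i_lt.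
apply: le_trans (rayleigh_lb_mul_le_qform S u); apply: ler_wpM2r; first exact: sqnorm_ge0.
apply: ge_inf; last exact: eigenvalue_rayleigh_lb.
by exists (rayleigh_lb S) => a; apply: rayleigh_lb_le_eigenvalue.
Qed.

End Rayleigh.

Lemma ln_sub_ge (R : realType) (a b : R) : 0 < a -> 0 < b -> 1 - a / b <= ln b - ln a.
Proof.
move=> a_gt0 b_gt0; have ab_gt0 : 0 < a / b by rewrite divr_gt0.
have := @le_ln1Dx R (a / b - 1); rewrite [1 + _]addrC subrK ln_div ?posrE //.
rewrite ltrBrDl subrr => /(_ ab_gt0); lra.
Qed.

Lemma ler_mul_ln_sub_add (R : realType) (a b : R) : 0 < a -> 0 < b ->
  b <= b * (ln b - ln a) + a.
Proof.
move=> a_gt0 b_gt0; move/(ler_wpM2l (ltW b_gt0)): (ln_sub_ge a_gt0 b_gt0).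
by rewrite mulrBr mulr1 mulrCA mulfV ?gt_eqF // mulr1; lra.
Qed.

Section Normalization.
Variables (R : realType) (d : nat) (phi : nat -> 'cV[R]_d).
Local Notation r := (rr phi).

Lemma rrS n : r n.+1 = r n + sqnorm (phi n.+1).
Proof. by rewrite /rr big_nat_recr //= addrA. Qed.

Lemma rr_gt0 n : 0 < r n.
Proof. by rewrite /rr ltr_wpDr // sumr_ge0 // => i _; exact: sqnorm_ge0. Qed.

Lemma ler_rr m n : (m <= n)%N -> r m <= r n.
Proof.
move=> /subnK <-; elim: (n - m)%N => [|k IH] //=.
by rewrite addSn rrS; apply: le_trans IH _; rewrite lerDl sqnorm_ge0.
Qed.

Lemma ler_ln_rr m n : (m <= n)%N -> ln (r m) <= ln (r n).
Proof. by move=> mn; rewrite ler_ln ?posrE ?rr_gt0 ?ler_rr. Qed.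

(* [r 0 = 1] does not account for [phi 0], hence the hypotheses [0 < n]. *)
Lemma rr_pred n : (0 < n)%N -> r n.-1 = r n - sqnorm (phi n).
Proof. by case: n => // n _; rewrite rrS /= addrK. Qed.

Lemma sqnorm_le_rr n : (0 < n)%N -> sqnorm (phi n) <= r n.
Proof. by move=> n_gt0; rewrite -subr_ge0 -rr_pred // ltW ?rr_gt0. Qed.

Lemma sqnorm_div_rr_le_ln n : (0 < n)%N ->
  sqnorm (phi n) / r n <= ln (r n) - ln (r n.-1).
Proof.
move=> n_gt0; apply: le_trans (ln_sub_ge (rr_gt0 _) (rr_gt0 _)).
by rewrite rr_pred // mulrBl mulfV ?gt_eqF ?rr_gt0 // opprB addrC subrK.
Qed.

Lemma sum_sqnorm_div_rr_le_ln s t : (0 < s)%N -> (s <= t)%N ->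
  \sum_(s <= j < t) sqnorm (phi j) / r j <= ln (r t.-1) - ln (r s.-1).
Proof.
move=> s_gt0 st; rewrite -(telescope_sumr (fun k => ln (r k.-1))) //.
rewrite big_nat_cond [X in _ <= X]big_nat_cond; apply: ler_sum => j /andP[/andP[sj _] _].
by apply: sqnorm_div_rr_le_ln; apply: leq_trans sj.
Qed.

Lemma sum_sqnorm_le_rr s t : (0 < s)%N ->
  \sum_(s <= i < t) sqnorm (phi i) <= r t.-1.
Proof.
move=> s_gt0; have [st | ts] := leqP s t; last first.
  by rewrite big_geq ?(ltnW ts) // ltW ?rr_gt0.
rewrite /rr prednK ?(leq_trans s_gt0) //.
rewrite (big_cat_nat s_gt0 st) /= addrA lerDr addr_ge0 //.
by apply: sumr_ge0 => i _; exact: sqnorm_ge0.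
Qed.

Lemma AA_mulmx n v : AA phi n *m v = (dotv (phi n) v / r n) *: phi n.
Proof. by rewrite /AA -scalemxAl mulmx_rank1 scalerA mulrC. Qed.

End Normalization.

Section Trajectory.
Variables (R : realType) (d : nat) (phi : nat -> 'cV[R]_d) (x : nat -> 'cV[R]_d).
Hypothesis x_rec : forall n, x n.+1 = (1%:M - AA phi n) *m x n.
Local Notation r := (rr phi).
Local Notation V n := (sqnorm (x n)).
Local Notation err n := (dotv (phi n) (x n)).

Lemma traj_step n : x n.+1 = x n - (err n / r n) *: phi n.
Proof. by rewrite x_rec mulmxBl mul1mx AA_mulmx. Qed.

Lemma sqnorm_traj_step n : (0 < n)%N -> V n.+1 + err n ^+ 2 / r n <= V n.
Proof.
move=> n_gt0; rewrite traj_step -scaleNr sqnormDZ (dotvC (x n)).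
have r_neq0 : r n != 0 by rewrite gt_eqF ?rr_gt0.
have -> : 2 * - (err n / r n) * err n = - 2 * (err n ^+ 2 / r n) by field.
have : (- (err n / r n)) ^+ 2 * sqnorm (phi n) <= (err n / r n) ^+ 2 * r n.
  by rewrite sqrrN ler_wpM2l ?sqr_ge0 ?sqnorm_le_rr.
have -> : (err n / r n) ^+ 2 * r n = err n ^+ 2 / r n by field.
lra.
Qed.

Lemma sqnorm_traj_tele s i : (0 < s)%N -> (s <= i)%N ->
  V i + \sum_(s <= j < i) err j ^+ 2 / r j <= V s.
Proof.
move=> s_gt0 /subnK <-; elim: (i - s)%N => [|k IH] /=.
  by rewrite add0n big_geq // addr0.
rewrite addSn big_nat_recr ?leq_addl //=; apply: le_trans IH.
by have := @sqnorm_traj_step (k + s) (leq_trans s_gt0 (leq_addl _ _)); lra.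
Qed.

Lemma err_sqr_div_ge0 n : 0 <= err n ^+ 2 / r n.
Proof. by rewrite divr_ge0 ?sqr_ge0 // ltW ?rr_gt0. Qed.

Lemma sqnorm_traj_noninc s i : (0 < s)%N -> (s <= i)%N -> V i <= V s.
Proof.
move=> s_gt0 si; apply: le_trans (sqnorm_traj_tele s_gt0 si); rewrite lerDl.
by apply: sumr_ge0 => j _; apply: err_sqr_div_ge0.
Qed.

Lemma traj_sub s i : (s <= i)%N -> x s - x i = \sum_(s <= j < i) (err j / r j) *: phi j.
Proof.
move=> /subnK <-; elim: (i - s)%N => [|k IH] /=.
  by rewrite add0n big_geq // subrr.
by rewrite addSn big_nat_recr ?leq_addl //= -IH traj_step opprD opprK addrA.
Qed.

Lemma sqnorm_traj_sub_le s i : (0 < s)%N -> (s <= i)%N ->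
  sqnorm (x s - x i) <= (ln (r i.-1) - ln (r s.-1)) * (V s - V i).
Proof.
move=> s_gt0 si; rewrite traj_sub //.
apply: le_trans (sqnorm_sum_le _ (c := fun j => sqnorm (phi j) / r j)
                               (w := fun j => err j ^+ 2 / r j) _ _ _) _.
- by move=> j; rewrite divr_ge0 ?sqnorm_ge0 // ltW ?rr_gt0.
- exact: err_sqr_div_ge0.
- move=> j; rewrite sqnormZ le_eqVlt; apply/predU1l.
  by field; rewrite gt_eqF ?rr_gt0.
apply: ler_pM.
- by apply: sumr_ge0 => j _; rewrite divr_ge0 ?sqnorm_ge0 // ltW ?rr_gt0.
- by apply: sumr_ge0 => j _; apply: err_sqr_div_ge0.
- exact: sum_sqnorm_div_rr_le_ln.
- by have := sqnorm_traj_tele s_gt0 si; lra.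
Qed.

Lemma sqr_dotv_head_le s i t : (0 < s)%N -> (s <= i < t)%N ->
  dotv (phi i) (x s) ^+ 2 <= 2 * r t.-1 * (err i ^+ 2 / r i)
    + 2 * sqnorm (phi i) * ((ln (r t.-1) - ln (r s.-1)) * (V s - V t)).
Proof.
move=> s_gt0 /andP[si it].
have i_le : (i <= t.-1)%N by rewrite -ltnS prednK ?(leq_ltn_trans _ it).
rewrite -{1}[x s](subrK (x i)) dotvDr; set b := dotv (phi i) (x s - x i).
have err_le : err i ^+ 2 <= r t.-1 * (err i ^+ 2 / r i).
  rewrite [X in X <= _](_ : _ = r i * (err i ^+ 2 / r i)); last first.
    by field; rewrite gt_eqF ?rr_gt0.
  by rewrite ler_wpM2r ?err_sqr_div_ge0 ?ler_rr.
have L_ge0 : 0 <= ln (r i.-1) - ln (r s.-1).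
  by rewrite subr_ge0 ler_ln_rr // -!subn1 leq_sub2r.
have b_le : b ^+ 2 <= sqnorm (phi i) * ((ln (r t.-1) - ln (r s.-1)) * (V s - V t)).
  apply: le_trans (dotv_CauchySchwarz _ _) _; rewrite ler_wpM2l ?sqnorm_ge0 //.
  apply: le_trans (sqnorm_traj_sub_le s_gt0 si) _.
  apply: ler_pM => //.
  - by rewrite subr_ge0 sqnorm_traj_noninc.
  - by rewrite lerD2r ler_ln_rr // -!subn1 leq_sub2r // ltnW.
  - by rewrite lerD2l lerN2 sqnorm_traj_noninc ?(leq_trans s_gt0) ?(ltnW it).
have := sqr_ge0 (b - err i); lra.
Qed.

Lemma sum_sqr_dotv_head_le s t : (0 < s)%N -> (s <= t)%N ->
  \sum_(s <= i < t) dotv (phi i) (x s) ^+ 2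
    <= 4 * (r t.-1 * (ln (r t.-1) - ln (r s.-1)) + r s.-1) * (V s - V t).
Proof.
move=> s_gt0 st; set L := ln (r t.-1) - ln (r s.-1); set dV := V s - V t.
have L_ge0 : 0 <= L by rewrite subr_ge0 ler_ln_rr // -!subn1 leq_sub2r.
have dV_ge0 : 0 <= dV by rewrite subr_ge0 sqnorm_traj_noninc.
have rt_gt0 := rr_gt0 phi t.-1; have rs_gt0 := rr_gt0 phi s.-1.
apply: le_trans (_ : \sum_(s <= i < t) (2 * r t.-1 * (err i ^+ 2 / r i)
                      + 2 * sqnorm (phi i) * (L * dV)) <= _).
  rewrite big_nat_cond [X in _ <= X]big_nat_cond; apply: ler_sum => i /andP[sit _].
  exact: sqr_dotv_head_le.
rewrite big_split /= -mulr_sumr -mulr_suml -mulr_sumr.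
have sum_err_le : \sum_(s <= i < t) err i ^+ 2 / r i <= dV.
  by have := sqnorm_traj_tele s_gt0 st; rewrite /dV; lra.
set D := r t.-1 * L + r s.-1.
have rt_le : r t.-1 <= D := ler_mul_ln_sub_add rs_gt0 rt_gt0.
have rtL_le : r t.-1 * L <= D by rewrite lerDl ltW.
have head_le : r t.-1 * \sum_(s <= i < t) err i ^+ 2 / r i <= D * dV.
  apply: ler_pM rt_le sum_err_le; first exact: ltW.
  by apply: sumr_ge0 => i _; apply: err_sqr_div_ge0.
have drift_le : (\sum_(s <= i < t) sqnorm (phi i)) * (L * dV) <= D * dV.
  rewrite mulrA; apply: ler_wpM2r => //; apply: le_trans rtL_le.
  by rewrite ler_wpM2r ?sum_sqnorm_le_rr.
lra.
Qed.

Lemma lambda_min_block_le s t : (0 < s)%N -> (s <= t)%N ->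
  lambda_min (\sum_(s <= i < t) phi i *m (phi i)^T) * V s
    <= 4 * (r t.-1 * (ln (r t.-1) - ln (r s.-1)) + r s.-1) * (V s - V t).
Proof.
move=> s_gt0 st; apply: le_trans (sum_sqr_dotv_head_le s_gt0 st).
rewrite -(eq_bigr _ (fun i _ => qform_rank1 (phi i) (x s))) -qform_sum.
apply: lambda_min_mul_le_qform.
by rewrite raddf_sum; apply: eq_bigr => i _; rewrite /= trmx_mul trmxK.
Qed.

End Trajectory.

Section Blocks.
Variables (R : realType) (d : nat) (phi : nat -> 'cV[R]_d) (t : nat -> nat).
Hypotheses (t_incr : forall k, (t k < t k.+1)%N) (t0_gt0 : (0 < t 0)%N).
Local Notation a k := (lambda_min (Sblock phi t k) / Dblock phi t k).

Lemma t_gt0 k : (0 < t k)%N.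
Proof. by elim: k => // k IH; apply: leq_trans IH (ltnW (t_incr k)). Qed.

Lemma Dblock_gt0 k : 0 < Dblock phi t k.
Proof.
rewrite /Dblock ltr_wpDl ?rr_gt0 // mulr_ge0 ?(ltW (rr_gt0 _ _)) //.
by rewrite subr_ge0 ler_ln_rr // leq_sub2r // ltnW.
Qed.

Variable x : nat -> 'cV[R]_d.
Hypothesis x_rec : forall n, x n.+1 = (1%:M - AA phi n) *m x n.
Local Notation V n := (sqnorm (x n)).

Lemma sqnorm_traj_block_decay k : V (t k.+1) <= expR (- (a k / 4)) * V (t k).
Proof.
have := lambda_min_block_le x_rec (t_gt0 k) (ltnW (t_incr k)).
rewrite -/(Sblock phi t k) -!subn1 -/(Dblock phi t k) => block_le.
have decay : a k * V (t k) <= 4 * (V (t k) - V (t k.+1)).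
  by rewrite mulrAC ler_pdivrMr ?Dblock_gt0 // mulrAC.
have := expR_ge1Dx (- (a k / 4)); have := sqnorm_ge0 (x (t k)); nra.
Qed.

Lemma sqnorm_traj_subseq_le n :
  V (t n) <= expR (- (\sum_(0 <= k < n) a k / 4)) * V (t 0).
Proof.
elim: n => [|n IH]; first by rewrite big_geq // oppr0 expR0 mul1r.
apply: le_trans (sqnorm_traj_block_decay n) _.
have := ler_wpM2l (expR_ge0 (- (a n / 4))) IH.
by rewrite big_nat_recr //= opprD expRD; lra.
Qed.

Lemma sqnorm_traj_cvg0 :
  (fun n => \sum_(0 <= k < n) a k) @ \oo --> +oo -> V n @[n --> \oo] --> 0.
Proof.
move=> sum_a_cvg.
have quarter_cvg : (fun n => \sum_(0 <= k < n) a k / 4) @ \oo --> +oo.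
  apply/cvgryPge => A; near=> n.
  rewrite -mulr_suml ler_pdivlMr // mulrC; near: n.
  exact: (cvgryPge _).1 sum_a_cvg (4 * A).
have exp_cvg : expR (- (\sum_(0 <= k < n) a k / 4)) * V (t 0) @[n --> \oo] --> 0.
  move/cvgMl: (cvg_comp _ _ quarter_cvg (@cvgr_expR R)) => /(_ (V (t 0))).
  by rewrite mul0r.
apply/cvgr0Pnorm_lt => eps eps_gt0.
have [N _ expN] := cvgr0_norm_lt _ exp_cvg _ eps_gt0.
exists (t N) => // n /= tN_le; rewrite ger0_norm ?sqnorm_ge0 //.
apply: le_lt_trans (sqnorm_traj_noninc x_rec (t_gt0 N) tN_le) _.
apply: le_lt_trans (sqnorm_traj_subseq_le N) _.
by apply: le_lt_trans (ler_norm _) (expN N (leqnn N)).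
Unshelve. all: by end_near.
Qed.

End Blocks.

Lemma cvg_mx0_col (R : realType) d p (M : nat -> 'M[R]_(d, p)) :
  (forall j, sqnorm (col j (M n)) @[n --> \oo] --> 0) ->
  M n @[n --> \oo] --> (0 : 'M[R]_(d, p)).
Proof.
move=> col_cvg; apply/cvgr0Pnorm_lt => eps eps_gt0.
have eps2_gt0 : 0 < eps ^+ 2 by rewrite exprn_gt0.
have cols_small : \forall n \near \oo, forall j, sqnorm (col j (M n)) < eps ^+ 2.
  apply: filter_forall => j; near=> n.
  rewrite -[sqnorm _]ger0_norm ?sqnorm_ge0 //; near: n.
  exact: cvgr0_norm_lt _ (col_cvg j) _ eps2_gt0.
near=> n; have col_lt : forall j, sqnorm (col j (M n)) < eps ^+ 2 by near: n.
rewrite /Num.Def.normr /= mx_normrE.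
apply: bigmax_lt => // -[i j] _ /=.
rewrite -(ltr_pXn2r (n := 2)) ?nnegrE ?(ltW eps_gt0) //.
rewrite real_normK ?num_real //; apply: le_lt_trans (col_lt j).
by have := sqr_coord_le_sqnorm (col j (M n)) i; rewrite mxE.
Unshelve. all: by end_near.
Qed.

Unset Implicit Arguments.
Set Strict Implicit.

Theorem mainTheorem3 (R : realType) (d : nat) (phi : nat -> 'cV[R]_d)
  (t : nat -> nat)
  (t_incr : forall k, (t k < t k.+1)%N) (t0_ge1 : (1 <= t 0)%N) :
  (fun n => \sum_(0 <= k < n) lambda_min (Sblock phi t k) / Dblock phi t k)
      @ \oo --> +oo ->
  (fun n => Phi phi n 0) @ \oo --> (0 : 'M[R]_d).
Proof.
move=> sum_cvg; apply: cvg_mx0_col => j.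
apply: (sqnorm_traj_cvg0 t_incr t0_ge1 _ sum_cvg) => n.
by rewrite /= !colE mulmxA.
Qed.
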